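(* Let $R$ be a generalized weakly Rickart $*$-ring. Then (1) for each $x\in R$ there exists $n\in\mathbb N$ such that $r(x^n)\cap (x^* )^nR=\{0\}$; and (2) the involution $*$ is weakly proper.
   Context: A $*$-ring is an associative ring $R$ with an involution $x\mapsto x^*$ (additive, $(xy)^*=y^*x^*$, $x^{**}=x$). A projection is an element $e$ with $e=e^*=e^2$. For $a\in R$, $r(a)=\{b\in R: ab=0\}$. A projection $e$ is a generalized right projection of $x$ if there exists $n\in\mathbb N$ with $x^ne=x^n$ and, for all $y\in R$, $x^ny=0$ implies $ey=0$. $R$ is a generalized weakly Rickart $*$-ring if every element has a generalized right projection. The involution is weakly proper if for every $x\in R$, $xx^*=0$ implies $x^n=0$ for some $n\in\mathbb N$. *)

(* A (not necessarily unital) associative *-ring is given by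
   an additive abelian group T (a zmodType), a multiplication [mul] and an
   involution [star], with the ring / involution axioms as hypotheses. *)
From HB Require Import structures.
From mathcomp Require Import all_boot all_algebra.
Set Implicit Arguments. Unset Strict Implicit. Unset Printing Implicit Defensive.
Import GRing.Theory.
Local Open Scope ring_scope.

Section StarRing.
Variables (T : zmodType) (mul : T -> T -> T) (star : T -> T).

Definition is_assoc_ring : Prop :=
  [/\ forall x y z, mul x (mul y z) = mul (mul x y) z,
      forall x y z, mul x (y + z) = mul x y + mul x z &
      forall x y z, mul (x + y) z = mul x z + mul y z].

Definition is_involution : Prop :=
  [/\ forall x y, star (x + y) = star x + star y,
      forall x y, star (mul x y) = mul (star y) (star x) &
      forall x, star (star x) = x].

(* positive powers: rpow x n = x^n for n >= 1 (only used with 0 < n) *)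
Definition rpow (x : T) (n : nat) : T := iter n.-1 (mul x) x.

Definition is_projection (e : T) : Prop := e = star e /\ mul e e = e.

Definition rann (a : T) : T -> Prop := fun b => mul a b = 0.

Definition gen_right_projection (x e : T) : Prop :=
  is_projection e /\
  exists n : nat, (0 < n)%N /\ mul (rpow x n) e = rpow x n /\
    forall y : T, mul (rpow x n) y = 0 -> mul e y = 0.

Definition gen_weakly_rickart : Prop :=
  forall x : T, exists e : T, gen_right_projection x e.

Definition weakly_proper : Prop :=
  forall x : T, mul x (star x) = 0 -> exists n : nat, (0 < n)%N /\ rpow x n = 0.

End StarRing.

From mathcomp Require Import all_boot all_algebra.
Set Implicit Arguments. Unset Strict Implicit. Unset Printing Implicit Defensive.
Import GRing.Theory.
Local Open Scope ring_scope.

(* If e is a projection with a e = a and r(a) ⊆ r(e), taking adjoints in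
   a e = a gives e a^* = a^*; hence every a^* r lying in r(a) equals
   e a^* r = 0.  For a = x^n, a^* is the n-th power of x^*, which gives (1).  If
   x x^* = 0 then x^n (x^n)^* = x^(n-1) x x^* (x^(n-1))^* = 0, so (x^n)^* = 0
   by the same argument, hence x^n = 0: this is (2). *)

Section StarRing.
Variables (T : zmodType) (mul : T -> T -> T) (star : T -> T).
Hypotheses (ringT : is_assoc_ring mul) (involT : is_involution mul star).

Let mulA x y z : mul x (mul y z) = mul (mul x y) z. Proof. by case: ringT. Qed.
Let mulDr x y z : mul x (y + z) = mul x y + mul x z. Proof. by case: ringT. Qed.
Let mulDl x y z : mul (x + y) z = mul x z + mul y z. Proof. by case: ringT. Qed.
Let starD x y : star (x + y) = star x + star y. Proof. by case: involT. Qed.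
Let starM x y : star (mul x y) = mul (star y) (star x). Proof. by case: involT. Qed.
Let starK x : star (star x) = x. Proof. by case: involT. Qed.

Lemma mulx0 x : mul x 0 = 0.
Proof. by apply: (@addrI _ (mul x 0)); rewrite -mulDr !addr0. Qed.

Lemma mul0x x : mul 0 x = 0.
Proof. by apply: (@addrI _ (mul 0 x)); rewrite -mulDl !addr0. Qed.

Lemma star0 : star 0 = 0.
Proof. by apply: (@addrI _ (star 0)); rewrite -starD !addr0. Qed.

Lemma rpowSr x n : rpow mul x n.+2 = mul (rpow mul x n.+1) x.
Proof.
elim: n => [|n IH] //.
by rewrite -[LHS]/(mul x (rpow mul x n.+2)) {1}IH mulA.
Qed.

Lemma star_rpow x n : star (rpow mul x n) = rpow mul (star x) n.
Proof.
case: n => [|n] //; elim: n => [|n IH] //.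
by rewrite rpowSr starM IH.
Qed.

Lemma rpow_mul_star_eq0 x n :
  mul x (star x) = 0 -> mul (rpow mul x n) (star (rpow mul x n)) = 0.
Proof.
move=> xx0; case: n => [|[|n]] //.
by rewrite rpowSr starM -mulA (mulA x) xx0 mul0x mulx0.
Qed.

Definition right_projection (a e : T) : Prop :=
  [/\ is_projection mul star e, mul a e = a &
      forall y, mul a y = 0 -> mul e y = 0].

Lemma gen_right_projection_rpow x e :
  gen_right_projection mul star x e ->
  exists n, (0 < n)%N /\ right_projection (rpow mul x n) e.
Proof. by case=> proj_e [n [n0 [xe rx]]]; exists n. Qed.

Lemma mul_star_of_selfadjoint a e :
  e = star e -> mul a e = a -> mul e (star a) = star a.
Proof. by move=> e_sa ae_a; rewrite -{2}ae_a starM -e_sa. Qed.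

Section RightProjection.
Variables (a e : T).
Hypothesis ae : right_projection a e.

Lemma right_projection_mul_star : mul e (star a) = star a.
Proof. by have [[e_sa _] ae_a _] := ae; apply: mul_star_of_selfadjoint. Qed.

Lemma right_projection_star_range r :
  mul a (mul (star a) r) = 0 -> mul (star a) r = 0.
Proof.
have [_ _ rann_e] := ae.
by move=> /rann_e; rewrite mulA right_projection_mul_star.
Qed.

Lemma right_projection_mul_star_eq0 : mul a (star a) = 0 -> a = 0.
Proof.
have [_ _ rann_e] := ae.
by move=> /rann_e; rewrite right_projection_mul_star -{2}[a]starK => ->; rewrite star0.
Qed.

End RightProjection.
End StarRing.

Theorem mainTheorem10 (T : zmodType) (mul : T -> T -> T) (star : T -> T) :
  is_assoc_ring mul -> is_involution mul star ->
  gen_weakly_rickart mul star ->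
  (forall x : T, exists n : nat, (0 < n)%N /\
     forall z : T, rann mul (rpow mul x n) z ->
       (exists r : T, z = mul (rpow mul (star x) n) r) -> z = 0)
  /\ weakly_proper mul star.
Proof.
move=> ringT involT rickartT; split.
  move=> x; have [e /gen_right_projection_rpow [n [n0 proj]]] := rickartT x.
  exists n; split=> // z + [r z_r]; rewrite z_r /rann -(star_rpow ringT involT).
  exact: (right_projection_star_range ringT involT proj).
move=> x xx0; have [e /gen_right_projection_rpow [n [n0 proj]]] := rickartT x.
exists n; split=> //.
exact: (right_projection_mul_star_eq0 involT proj (rpow_mul_star_eq0 ringT involT n xx0)).
Qed.
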